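(* Let $\mathcal{S}$ be a subspace of $\mathbb{C}^n$. Let $\mathcal{D}^+_n$ be the set of $n\times n$ positive definite diagonal matrices and $\mathcal{D}^+_{0,n}$ the set of $n\times n$ positive semidefinite diagonal matrices. Then $$\sup_{D\in\mathcal{D}^+_n}\|P_{D,\mathcal{S}}\|=\sup_{D\in\mathcal{D}^+_{0,n}}\|P_{D,\mathcal{S}}\|.$$
   Context: Norms are operator norms for the Euclidean norm. For a positive semidefinite matrix $D$ and a subspace $\mathcal{S}$ of $\mathbb{C}^n$, write $D=\begin{pmatrix} a & b\\ b^* & c\end{pmatrix}$ with respect to $\mathcal{S}\oplus\mathcal{S}^\perp$; then $P_{D,\mathcal{S}}:=\begin{pmatrix} 1 & a^\dagger b\\ 0&0\end{pmatrix}$ ($a^\dagger$ Moore–Penrose inverse), an idempotent with range $\mathcal{S}$ satisfying $DP_{D,\mathcal{S}}=P_{D,\mathcal{S}}^*D$, of minimal norm among such idempotents. *)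

From HB Require Import structures.
From mathcomp Require Import all_boot all_order all_algebra.
From mathcomp Require Import complex.
From mathcomp Require Import boolp classical_sets reals constructive_ereal ereal.

Set Implicit Arguments.
Unset Strict Implicit.
Unset Printing Implicit Defensive.

Import Order.TTheory GRing.Theory Num.Theory.
Local Open Scope ring_scope.
Local Open Scope classical_set_scope.

Section Defs.
Variable R : realType.
Local Notation C := (complex R).

Definition adjmx m n (A : 'M[C]_(m, n)) : 'M[C]_(n, m) :=
  map_mx (@conjc R) A^T.

Definition is_MPinv m n (A : 'M[C]_(m, n)) (X : 'M[C]_(n, m)) : Prop :=
  [/\ A *m X *m A = A, X *m A *m X = X,
      adjmx (A *m X) = A *m X & adjmx (X *m A) = X *m A].

Definition MPinv m n (A : 'M[C]_(m, n)) : 'M[C]_(n, m) :=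
  match pselect (exists X, is_MPinv A X) with
  | left h => projT1 (cid h)
  | right _ => 0
  end.

Definition is_orthoproj n (S : {vspace 'cV[C]_n}) (Q : 'M[C]_n) : Prop :=
  [/\ adjmx Q = Q, Q *m Q = Q,
      (forall x : 'cV[C]_n, (Q *m x) \in S) &
      (forall x : 'cV[C]_n, x \in S -> Q *m x = x)].

Definition orthoproj n (S : {vspace 'cV[C]_n}) : 'M[C]_n :=
  match pselect (exists Q, is_orthoproj S Q) with
  | left h => projT1 (cid h)
  | right _ => 0
  end.

(* P_{D,S} = [[1, a^+ b],[0,0]] w.r.t. S (+) S^perp, written with the
   orthogonal projection Q onto S:  a = Q D Q (restricted to S),
   b = Q D (1 - Q) (restricted to S^perp), so
   P_{D,S} = Q + (Q D Q)^+ D (1 - Q). *)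
Definition PDS n (D : 'M[C]_n) (S : {vspace 'cV[C]_n}) : 'M[C]_n :=
  let Q := orthoproj S in
  Q + MPinv (Q *m D *m Q) *m D *m (1%:M - Q).

Definition vnorm n (x : 'cV[C]_n) : R :=
  Num.sqrt (\sum_i (ComplexField.Normc.normc (x i 0)) ^+ 2).

Definition opnorm n (A : 'M[C]_n) : \bar R :=
  ereal_sup [set (vnorm (A *m x))%:E | x in [set x : 'cV[C]_n | vnorm x = 1]].

Definition posdef_diag n (D : 'M[C]_n) : Prop :=
  is_diag_mx D /\ forall i, 0 < D i i.
Definition psd_diag n (D : 'M[C]_n) : Prop :=
  is_diag_mx D /\ forall i, 0 <= D i i.

End Defs.

From mathcomp Require Import all_boot all_order all_algebra.
From mathcomp Require Import complex.
From mathcomp Require Import boolp classical_sets reals constructive_ereal ereal.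
From mathcomp Require Import ring lra.
Import Order.TTheory GRing.Theory Num.Theory.
Set Implicit Arguments.
Unset Strict Implicit.
Unset Printing Implicit Defensive.
Local Open Scope ring_scope.
Local Open Scope complex_scope.

(* Let Q be the orthogonal projection onto S, A := Q D Q and D_e := D + e I,
   so that Q D_e Q = A + e Q.  As A >= 0, Y := (A + e Q)^+ inverts A + e Q on
   the range of Q, with norm at most 1/e there.  As D >= 0, the range of Q D
   lies in that of A, and with X := A^+ this gives
     P_{D,S} x - P_{D_e,S} x = e (u - e Y u),   u := X^H X Q D (1 - Q) x.
   The difference is thus O(e) with u independent of e, so ||P_{D,S} x|| is at
   most the limit inferior of ||P_{D_e,S} x||, and every D_e is positive
   definite. *)

Section Adjoint.
Variable R : realType.
Local Notation C := (complex R).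

Lemma adjmxK m n (A : 'M[C]_(m, n)) : adjmx (adjmx A) = A.
Proof. by apply/matrixP=> i j; rewrite !mxE conjcK. Qed.

Lemma adjmxM m n p (A : 'M[C]_(m, n)) (B : 'M[C]_(n, p)) :
  adjmx (A *m B) = adjmx B *m adjmx A.
Proof. by rewrite /adjmx trmx_mul map_mxM. Qed.

Lemma adjmx0 m n : adjmx (0 : 'M[C]_(m, n)) = 0.
Proof. by apply/matrixP=> i j; rewrite !mxE conjc0. Qed.

Lemma adjmxD m n (A B : 'M[C]_(m, n)) : adjmx (A + B) = adjmx A + adjmx B.
Proof. by apply/matrixP=> i j; rewrite !mxE rmorphD. Qed.

Lemma adjmx_realZ m n (r : R) (A : 'M[C]_(m, n)) :
  adjmx (r%:C *: A) = r%:C *: adjmx A.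
Proof. by apply/matrixP=> i j; rewrite !mxE rmorphM /= oppr0. Qed.

Lemma adjmx_inv n (A : 'M[C]_n) : adjmx (invmx A) = invmx (adjmx A).
Proof. by rewrite /adjmx trmx_inv map_invmx. Qed.

Lemma mulmx_diagr p n (M : 'M[C]_(p, n)) (D : 'M[C]_n) i k :
  is_diag_mx D -> (M *m D) i k = M i k * D k k.
Proof.
move=> /is_diag_mxP hD; rewrite mxE (bigD1 k) //= big1 ?addr0 // => j hj.
by rewrite hD ?mulr0.
Qed.

Lemma mulmx_diagl n p (D : 'M[C]_n) (M : 'M[C]_(n, p)) i k :
  is_diag_mx D -> (D *m M) i k = D i i * M i k.
Proof.
move=> /is_diag_mxP hD; rewrite mxE (bigD1 i) //= big1 ?addr0 // => j hj.
by rewrite hD ?mul0r // eq_sym.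
Qed.

Lemma adjmx_psd_diag n (D : 'M[C]_n) : psd_diag D -> adjmx D = D.
Proof.
case=> /is_diag_mxP hD hD0; apply/matrixP=> i j; rewrite !mxE.
have [->|hij] := eqVneq i j; first exact: geC0_conj.
by rewrite !hD ?conjc0 // eq_sym.
Qed.

Lemma psd_diag1 n : psd_diag (1%:M : 'M[C]_n).
Proof. by split=> [|i]; rewrite ?scalar_mx_is_diag // mxE eqxx ler01. Qed.

Lemma psd_diag_mul_adj_eq0 p n (M : 'M[C]_(p, n)) (D : 'M[C]_n) :
  psd_diag D -> M *m D *m adjmx M = 0 -> M *m D = 0.
Proof.
move=> [hD hD0] MDM0; apply/matrixP=> i k; rewrite mulmx_diagr // [RHS]mxE.
have /matrixP/(_ i i) := MDM0; rewrite [RHS]mxE mxE => sum0.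
have term_ge0 j : true -> 0 <= (M *m D) i j * adjmx M j i.
  by move=> _; rewrite mulmx_diagr // !mxE mulrAC mulr_ge0 ?mul_conjC_ge0.
have := psumr_eq0P term_ge0 sum0 (i := k) isT.
rewrite mulmx_diagr // !mxE mulrAC => /eqP.
by rewrite mulf_eq0 mul_conjC_eq0 => /orP[] /eqP ->; rewrite ?mulr0 ?mul0r.
Qed.

Lemma adj_mulmx_eq0 m p (M : 'M[C]_(m, p)) : adjmx M *m M = 0 -> M = 0.
Proof.
move=> MM0; apply: (can_inj (@adjmxK _ _)).
have := @psd_diag_mul_adj_eq0 _ _ (adjmx M) _ (psd_diag1 m).
by rewrite mulmx1 adjmxK adjmx0 => ->.
Qed.

Lemma unitmx_ker0 r (N : 'M[C]_r) :
  (forall z : 'cV_r, N *m z = 0 -> z = 0) -> N \in unitmx.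
Proof.
move=> ker0; rewrite -unitmx_tr -row_free_unit; apply: inj_row_free => v vN0.
apply: trmx_inj; rewrite trmx0; apply: ker0.
by apply: trmx_inj; rewrite trmx_mul trmxK vN0 trmx0.
Qed.

Lemma gram_unitmx m r (F : 'M[C]_(m, r)) :
  (forall z : 'cV_r, F *m z = 0 -> z = 0) -> adjmx F *m F \in unitmx.
Proof.
move=> ker0; apply: unitmx_ker0 => z Fz0; apply/ker0/adj_mulmx_eq0.
by rewrite adjmxM -mulmxA (mulmxA (adjmx F)) Fz0 mulmx0.
Qed.

End Adjoint.

Section MoorePenrose.
Variable R : realType.
Local Notation C := (complex R).

Lemma is_MPinv_full_rank m n r (A : 'M[C]_(m, n)) (F : 'M[C]_(m, r))
    (G : 'M[C]_(r, n)) :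
  A = F *m G -> (forall z : 'cV_r, F *m z = 0 -> z = 0) ->
  (forall z : 'cV_r, adjmx G *m z = 0 -> z = 0) ->
  is_MPinv A
    (adjmx G *m invmx (G *m adjmx G) *m invmx (adjmx F *m F) *m adjmx F).
Proof.
move=> -> F0 G0; set MF := adjmx F *m F; set MG := G *m adjmx G.
have uF : MF \in unitmx by apply: gram_unitmx.
have uG : MG \in unitmx by rewrite /MG -{1}[G]adjmxK; apply: gram_unitmx.
have adjMF : adjmx MF = MF by rewrite /MF adjmxM adjmxK.
have adjMG : adjmx MG = MG by rewrite /MG adjmxM adjmxK.
have MGV : MG *m invmx MG = 1%:M := mulmxV uG.
have MFV : invmx MF *m MF = 1%:M := mulVmx uF.
set X := _ *m adjmx F.
have AX : F *m G *m X = F *m (invmx MF *m adjmx F).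
  by rewrite /X -!mulmxA (mulmxA G) -/MG (mulmxA MG) MGV mul1mx.
have XA : X *m (F *m G) = adjmx G *m invmx MG *m G.
  by rewrite /X !mulmxA -(mulmxA _ (adjmx F)) -/MF -(mulmxA _ (invmx MF) MF)
    MFV mulmx1.
split.
- by rewrite AX !mulmxA -(mulmxA _ (adjmx F)) -/MF -(mulmxA _ _ MF) MFV mulmx1.
- by rewrite XA /X !mulmxA -(mulmxA _ G) -/MG -(mulmxA _ MG) MGV mulmx1.
- by rewrite AX !adjmxM adjmxK adjmx_inv adjMF mulmxA.
- by rewrite XA !adjmxM adjmxK adjmx_inv adjMG mulmxA.
Qed.

Lemma exists_MPinv m n (A : 'M[C]_(m, n)) : exists X, is_MPinv A X.
Proof.
eexists; apply: (is_MPinv_full_rank (esym (mulmx_base A))) => z Fz0.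
  case/row_fullP: (col_base_full A) => B BA.
  by rewrite -[z]mul1mx -BA -mulmxA Fz0 mulmx0.
apply: (can_inj (@adjmxK _ _ _)); apply: (row_free_inj (row_base_free A)).
by rewrite /= adjmx0 mul0mx -[row_base A]adjmxK -adjmxM Fz0 adjmx0.
Qed.

Lemma MPinvP m n (A : 'M[C]_(m, n)) : is_MPinv A (MPinv A).
Proof.
rewrite /MPinv; case: pselect => [h|h]; first exact: (projT2 (cid h)).
by case: h; apply: exists_MPinv.
Qed.

Lemma is_MPinv_adj m n (A : 'M[C]_(m, n)) X :
  is_MPinv A X -> is_MPinv (adjmx A) (adjmx X).
Proof.
case=> AXA XAX AX XA; split; rewrite -?adjmxM ?mulmxA.
- by rewrite AXA.
- by rewrite XAX.
- by rewrite XA XA.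
- by rewrite AX AX.
Qed.

Lemma is_MPinv_adjL m n (A : 'M[C]_(m, n)) X :
  is_MPinv A X -> X = adjmx A *m adjmx X *m X.
Proof. by case=> _ XAX _ XA; rewrite -adjmxM XA -{1}XAX. Qed.

Lemma is_MPinv_adjR m n (A : 'M[C]_(m, n)) X :
  is_MPinv A X -> X = X *m adjmx X *m adjmx A.
Proof. by case=> _ XAX AX _; rewrite -mulmxA -adjmxM AX mulmxA XAX. Qed.

Lemma is_MPinv_rangeL m n (P : 'M[C]_n) (A : 'M[C]_(m, n)) X :
  is_MPinv A X -> P *m adjmx A = adjmx A -> P *m X = X.
Proof. by move=> /is_MPinv_adjL XE PA; rewrite XE !mulmxA PA. Qed.

Lemma is_MPinv_rangeR m n (P : 'M[C]_m) (A : 'M[C]_(m, n)) X :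
  is_MPinv A X -> adjmx A *m P = adjmx A -> X *m P = X.
Proof. by move=> /is_MPinv_adjR XE AP; rewrite XE -mulmxA AP. Qed.

End MoorePenrose.

Lemma young_sqr (R : realFieldType) (s a b d : R) :
  0 < d -> 0 <= a -> 0 <= b -> 0 <= s -> s <= a + b ->
  s ^+ 2 <= (1 + d) * a ^+ 2 + (1 + d^-1) * b ^+ 2.
Proof.
move=> d0 a0 b0 s0 sab.
have sab2 : s ^+ 2 <= (a + b) ^+ 2 by nra.
have sq_ge0 : 0 <= d^-1 * (d * a - b) ^+ 2.
  by rewrite mulr_ge0 ?sqr_ge0 ?invr_ge0 ?ltW.
have sqE : d^-1 * (d * a - b) ^+ 2 = d * a ^+ 2 + d^-1 * b ^+ 2 - 2 * a * b.
  by field; rewrite gt_eqF.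
by apply: (le_trans sab2); rewrite sqE in sq_ge0; nra.
Qed.

Lemma le_of_eps_bound (R : realFieldType) (a b K : R) : 0 <= b -> 0 <= K ->
  (forall e, 0 < e -> e <= 1 -> a <= (1 + e) * b + e * K) -> a <= b.
Proof.
move=> b0 K0 abK; apply/ler_addgt0Pr => d d0.
have bK0 : 0 < b + K + 1 by lra.
set e := Num.min 1 (d / (b + K + 1)).
have e0 : 0 < e by rewrite lt_min ltr01 divr_gt0.
have e1 : e <= 1 by rewrite ge_min lexx.
have ebK : e * (b + K + 1) <= d by rewrite -ler_pdivlMr // ge_min lexx orbT.
by have := abK e e0 e1; nra.
Qed.

Section SquaredNorm.
Variable R : realType.
Local Notation C := (complex R).

Definition cdot n (u v : 'cV[C]_n) : C := (adjmx u *m v) 0 0.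

Definition sqnorm n (x : 'cV[C]_n) : R :=
  \sum_i ComplexField.Normc.normc (x i 0) ^+ 2.

Lemma cdotZr n (u v : 'cV[C]_n) (c : C) : cdot u (c *: v) = c * cdot u v.
Proof. by rewrite /cdot -scalemxAr mxE. Qed.

Lemma cdotDl n (u v w : 'cV[C]_n) : cdot (u + v) w = cdot u w + cdot v w.
Proof. by rewrite /cdot adjmxD mulmxDl mxE. Qed.

Lemma cdotDr n (u v w : 'cV[C]_n) : cdot u (v + w) = cdot u v + cdot u w.
Proof. by rewrite /cdot mulmxDr mxE. Qed.

Lemma cdot_realZl n (r : R) (u v : 'cV[C]_n) :
  cdot (r%:C *: u) v = r%:C * cdot u v.
Proof. by rewrite /cdot adjmx_realZ -scalemxAl mxE. Qed.

Lemma cdot_mulmxl n (A : 'M[C]_n) (u v : 'cV[C]_n) :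
  cdot (A *m u) v = cdot u (adjmx A *m v).
Proof. by rewrite /cdot adjmxM mulmxA. Qed.

Lemma sqnormE n (x : 'cV[C]_n) : (sqnorm x)%:C = cdot x x.
Proof.
rewrite /sqnorm /cdot rmorph_sum /= mxE; apply: eq_bigr => i _.
by rewrite rmorphXn /= !mxE mulrC -sqr_normc.
Qed.

Lemma sqnorm_ge0 n (x : 'cV[C]_n) : 0 <= sqnorm x.
Proof. by apply: sumr_ge0 => i _; rewrite sqr_ge0. Qed.

Lemma cdot_self_ge0 n (x : 'cV[C]_n) : 0 <= cdot x x.
Proof. by rewrite -sqnormE lecR sqnorm_ge0. Qed.

Lemma cdot_self_eq0 n (x : 'cV[C]_n) : cdot x x = 0 -> x = 0.
Proof.
move=> xx0; apply: adj_mulmx_eq0; apply/matrixP=> i j.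
by rewrite !ord1 [RHS]mxE.
Qed.

Lemma vnorm_ge0 n (x : 'cV[C]_n) : 0 <= vnorm x.
Proof. exact: sqrtr_ge0. Qed.

Lemma vnorm_sqr n (x : 'cV[C]_n) : vnorm x ^+ 2 = sqnorm x.
Proof. by rewrite sqr_sqrtr // sqnorm_ge0. Qed.

Lemma sqnorm_realZ n (c : R) (x : 'cV[C]_n) :
  sqnorm (c%:C *: x) = c ^+ 2 * sqnorm x.
Proof.
apply: (@complexI R).
by rewrite rmorphM rmorphXn /= !sqnormE /cdot adjmx_realZ -scalemxAl -scalemxAr
  !mxE mulrA -expr2.
Qed.

Lemma sqnormD_le n (x y : 'cV[C]_n) (d : R) : 0 < d ->
  sqnorm (x + y) <= (1 + d) * sqnorm x + (1 + d^-1) * sqnorm y.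
Proof.
move=> d0; rewrite /sqnorm !mulr_sumr -big_split /=; apply: ler_sum => i _.
rewrite !mxE; apply: young_sqr; rewrite ?(@normr_ge0 _ (Rcomplex R)) //.
exact: (@ler_normD _ (Rcomplex R)).
Qed.

Lemma cdot_psd_diag_ge0 n (D : 'M[C]_n) (s : 'cV[C]_n) :
  psd_diag D -> 0 <= cdot s (D *m s).
Proof.
case=> hD hD0; rewrite /cdot mxE; apply: sumr_ge0 => i _.
by rewrite mulmx_diagl // !mxE mulrCA mulr_ge0 // mulrC mul_conjC_ge0.
Qed.

End SquaredNorm.

Section ShiftedCompression.
Variable R : realType.
Local Notation C := (complex R).
Variables (n : nat) (Q A : 'M[C]_n) (e : R).
Hypotheses (adjQ : adjmx Q = Q) (QQ : Q *m Q = Q) (adjA : adjmx A = A)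
  (QA : Q *m A = A) (A_psd : forall t : 'cV[C]_n, 0 <= cdot t (A *m t))
  (e_gt0 : 0 < e).

Let Ae := A + e%:C *: Q.

Let adjAe : adjmx Ae = Ae.
Proof. by rewrite adjmxD adjA adjmx_realZ adjQ. Qed.

Let QAe : Q *m Ae = Ae.
Proof. by rewrite mulmxDr QA -scalemxAr QQ. Qed.

Let QY Y : is_MPinv Ae Y -> Q *m Y = Y.
Proof. by move/is_MPinv_rangeL; apply; rewrite adjAe. Qed.

Lemma is_MPinv_shift_mulmx Y : is_MPinv Ae Y -> Y *m Ae = Q.
Proof.
move=> AeY; set T := Q - Y *m Ae.
have AeT : Ae *m T = 0.
  have [AeYAe _ _ _] := AeY.
  by rewrite mulmxBr -{1}adjAe -adjQ -adjmxM QAe adjAe mulmxA AeYAe subrr.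
have QT : Q *m T = T by rewrite mulmxBr QQ mulmxA (QY AeY).
have T0 (z : 'cV[C]_n) : T *m z = 0.
  set t := T *m z.
  have Qt : Q *m t = t by rewrite mulmxA QT.
  have At : A *m t = (- e%:C) *: t.
    have : Ae *m t = 0 by rewrite mulmxA AeT mul0mx.
    by rewrite mulmxDl -scalemxAl Qt scaleNr => /eqP; rewrite addr_eq0 => /eqP.
  have := A_psd t.
  rewrite At cdotZr mulNr oppr_ge0 pmulr_rle0 ?ltcR // => tt_le0.
  by apply: cdot_self_eq0; apply/le_anti; rewrite tt_le0 cdot_self_ge0.
apply/esym/eqP; rewrite -subr_eq0 -/T; apply/eqP/matrixP => i j.
by have /matrixP/(_ i 0) := T0 (delta_mx j 0); rewrite -colE !mxE.
Qed.

Lemma mulmx_is_MPinv_shift Y : is_MPinv Ae Y -> Ae *m Y = Q.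
Proof.
move/is_MPinv_adj; rewrite adjAe => /is_MPinv_shift_mulmx AeY.
by rewrite -[Y]adjmxK -adjAe -adjmxM AeY adjQ.
Qed.

Lemma MPinv_shift_bound (u : 'cV[C]_n) :
  Q *m u = u -> e ^+ 2 * sqnorm (MPinv Ae *m u) <= sqnorm u.
Proof.
move=> Qu; set t := MPinv Ae *m u.
have AeY := mulmx_is_MPinv_shift (MPinvP Ae).
have uE : u = A *m t + e%:C *: t.
  by rewrite -{1}Qu -AeY -mulmxA mulmxDl -scalemxAl (mulmxA Q) (QY (MPinvP Ae)).
rewrite -lecR rmorphM rmorphXn /= !sqnormE [in X in _ <= X]uE cdotDl !cdotDr.
rewrite !cdot_realZl !cdotZr [cdot (A *m t) t]cdot_mulmxl adjA.
rewrite mulrA -expr2 addrA lerDr.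
have eAt : 0 <= e%:C * cdot t (A *m t).
  by apply: mulr_ge0; rewrite ?A_psd // ler0c ltW.
by rewrite !addr_ge0 ?cdot_self_ge0.
Qed.

End ShiftedCompression.

Definition pds (R : realType) n (Q D : 'M[complex R]_n) : 'M[complex R]_n :=
  Q + MPinv (Q *m D *m Q) *m D *m (1%:M - Q).

Section Compression.
Variable R : realType.
Local Notation C := (complex R).
Variables (n : nat) (Q D : 'M[C]_n) (x : 'cV[C]_n).
Hypotheses (adjQ : adjmx Q = Q) (QQ : Q *m Q = Q) (hD : psd_diag D).

Let A := Q *m D *m Q.
Let u := adjmx (MPinv A) *m MPinv A *m (Q *m D *m (1%:M - Q) *m x).

Let adjA : adjmx A = A.
Proof. by rewrite !adjmxM adjQ adjmx_psd_diag // mulmxA. Qed.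

Let QA : Q *m A = A.
Proof. by rewrite !mulmxA QQ. Qed.

Let AQ : A *m Q = A.
Proof. by rewrite -mulmxA QQ. Qed.

Let A_psd (t : 'cV[C]_n) : 0 <= cdot t (A *m t).
Proof. by rewrite -!mulmxA -{1}adjQ -cdot_mulmxl cdot_psd_diag_ge0. Qed.

Let Qu : Q *m u = u.
Proof.
have XQ : MPinv A *m Q = MPinv A.
  by apply: (is_MPinv_rangeR (MPinvP A)); rewrite adjA.
by rewrite /u !mulmxA -adjQ -adjmxM XQ.
Qed.

Let compress_shift e : Q *m (D + e%:C%:M) *m Q = A + e%:C *: Q.
Proof. by rewrite mulmxDr mulmxDl mul_mx_scalar -scalemxAl QQ. Qed.

Lemma compress_range : A *m MPinv A *m Q *m D = Q *m D.
Proof.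
set X := MPinv A; have [AXA _ _ _] := MPinvP A.
have MD0 : (1%:M - A *m X) *m Q *m D = 0.
  apply: (psd_diag_mul_adj_eq0 hD).
  have -> : (1%:M - A *m X) *m Q *m D *m adjmx ((1%:M - A *m X) *m Q) =
      (1%:M - A *m X) *m A *m adjmx (1%:M - A *m X).
    by rewrite adjmxM adjQ /A !mulmxA.
  by rewrite mulmxBl mul1mx AXA subrr !mul0mx.
by move: MD0; rewrite !mulmxBl mul1mx => /eqP; rewrite subr_eq0 => /eqP/esym.
Qed.

Lemma pds_shift_sub e : 0 < e ->
  pds Q D *m x - pds Q (D + e%:C%:M) *m x =
  e%:C *: (u - e%:C *: (MPinv (A + e%:C *: Q) *m u)).
Proof.
move=> e_gt0; set X := MPinv A; set Y := MPinv (A + e%:C *: Q).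
have hX : is_MPinv A X := MPinvP A.
have hY : is_MPinv (A + e%:C *: Q) Y := MPinvP _.
have QX : Q *m X = X by apply: (is_MPinv_rangeL hX); rewrite adjA.
have XQ : X *m Q = X by apply: (is_MPinv_rangeR hX); rewrite adjA.
have YQ : Y *m Q = Y.
  apply: (is_MPinv_rangeR hY).
  by rewrite adjmxD adjA adjmx_realZ adjQ mulmxDl AQ -scalemxAl QQ.
have YA : Y *m A = Q - e%:C *: Y.
  have := is_MPinv_shift_mulmx adjQ QQ adjA QA A_psd e_gt0 hY.
  by rewrite mulmxDr -scalemxAr YQ => <-; rewrite addrK.
set y := Q *m D *m (1%:M - Q) *m x.
have AXy : A *m X *m y = y by rewrite /y !mulmxA compress_range.
have PD : pds Q D *m x = Q *m x + X *m y.
  by rewrite /pds -/A -/X mulmxDl /y -{1}XQ !mulmxA.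
have PDe : pds Q (D + e%:C%:M) *m x = Q *m x + Y *m y.
  rewrite /pds compress_shift -/Y mulmxDl; congr (_ + _).
  have Y1Q : Y *m (1%:M - Q) = 0 by rewrite mulmxBr mulmx1 YQ subrr.
  rewrite (mulmxDr Y D) mul_mx_scalar !mulmxDl -scalemxAl Y1Q scaler0 mul0mx.
  by rewrite addr0 /y -{1}YQ !mulmxA.
have Yy : Y *m y = X *m y - e%:C *: (Y *m (X *m y)).
  rewrite -{1}AXy (mulmxA Y) (mulmxA Y A) YA !mulmxBl QX -!scalemxAl.
  by rewrite -(mulmxA Y).
have Xy : X *m y = A *m u by rewrite {1}(is_MPinv_adjL hX) adjA /u !mulmxA.
have YAu : Y *m (A *m u) = u - e%:C *: (Y *m u).
  by rewrite (mulmxA Y A) YA mulmxBl Qu scalemxAl.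
by rewrite PD PDe opprD addrACA subrr add0r Yy subKr Xy YAu.
Qed.

Lemma sqnorm_pds_shift e : 0 < e -> e <= 1 ->
  sqnorm (pds Q D *m x) <=
  (1 + e) * sqnorm (pds Q (D + e%:C%:M) *m x) + e * (8 * sqnorm u).
Proof.
move=> e_gt0 e_le1; set Y := MPinv (A + e%:C *: Q).
have Yu_le : e ^+ 2 * sqnorm (Y *m u) <= sqnorm u.
  exact: (MPinv_shift_bound adjQ QQ adjA QA A_psd e_gt0 Qu).
have w_le : sqnorm (u - e%:C *: (Y *m u)) <= 4 * sqnorm u.
  rewrite -scaleNr -rmorphN; apply: le_trans (sqnormD_le _ _ ltr01) _.
  by rewrite sqnorm_realZ sqrrN invr1; have := sqnorm_ge0 u; lra.
rewrite -(subrK (pds Q (D + e%:C%:M) *m x) (pds Q D *m x)) pds_shift_sub //.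
rewrite addrC; apply: le_trans (sqnormD_le _ _ e_gt0) _.
rewrite sqnorm_realZ mulrA.
have -> : (1 + e^-1) * e ^+ 2 = e ^+ 2 + e by field; rewrite gt_eqF.
rewrite lerD2l -/Y; apply: le_trans (ler_wpM2l _ w_le) _.
  by rewrite addr_ge0 ?sqr_ge0 ?ltW.
have : 0 <= e * sqnorm u * (1 - e).
  by rewrite mulr_ge0 ?subr_ge0 // mulr_ge0 ?sqnorm_ge0 ?ltW.
nra.
Qed.

Lemma vnorm_pds_le (r : R) :
  (forall e, 0 < e -> e <= 1 -> vnorm (pds Q (D + e%:C%:M) *m x) <= r) ->
  vnorm (pds Q D *m x) <= r.
Proof.
move=> le_r.
have r_ge0 : 0 <= r := le_trans (vnorm_ge0 _) (le_r 1 ltr01 (lexx 1)).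
rewrite -(ler_pXn2r (isT : (0 < 2)%N)) ?nnegrE ?vnorm_ge0 //.
rewrite vnorm_sqr; apply: (le_of_eps_bound (sqr_ge0 r) (K := 8 * sqnorm u)).
  by rewrite mulr_ge0 ?sqnorm_ge0.
move=> e e_gt0 e_le1; apply: le_trans (sqnorm_pds_shift e_gt0 e_le1) _.
rewrite lerD2r; apply: ler_wpM2l; first by rewrite addr_ge0 // ltW.
by rewrite -vnorm_sqr ler_pXn2r ?nnegrE ?vnorm_ge0 ?le_r.
Qed.

End Compression.

Lemma orthoprojP (R : realType) n (S : {vspace 'cV[complex R]_n}) :
  adjmx (orthoproj S) = orthoproj S /\ orthoproj S *m orthoproj S = orthoproj S.
Proof.
rewrite /orthoproj; case: pselect => [h|_]; first by case: (projT2 (cid h)).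
by rewrite adjmx0 mul0mx.
Qed.

Lemma posdef_diag_shift (R : realType) n (D : 'M[complex R]_n) (e : R) :
  psd_diag D -> 0 < e -> posdef_diag (D + e%:C%:M).
Proof.
case=> /is_diag_mxP hD hD0 e_gt0; split=> [|i].
  apply/is_diag_mxP => i j ij.
  by rewrite !mxE hD // -val_eqE (negPf ij) mulr0n addr0.
by rewrite !mxE eqxx mulr1n ltr_wpDl ?ltcR.
Qed.

Local Open Scope classical_set_scope.
Unset Implicit Arguments.

Theorem proposition3p6 (R : realType) (n : nat)
    (S : {vspace 'cV[complex R]_n}) :
  ereal_sup [set opnorm (PDS D S) | D in [set D : 'M[complex R]_n | posdef_diag D]]
  = ereal_sup [set opnorm (PDS D S) | D in [set D : 'M[complex R]_n | psd_diag D]].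
Proof.
apply/eqP; rewrite eq_le; apply/andP; split.
  apply: ereal_sup_le => _ [D [hD hD0] <-]; exists D => //.
  by split=> // i; apply: ltW.
apply: ge_ereal_sup => _ [D hD <-]; apply: ge_ereal_sup => _ [x x1 <-].
set sup := ereal_sup _.
have le_sup e : 0 < e -> ((vnorm (PDS (D + e%:C%:M) S *m x))%:E <= sup)%E.
  move=> e_gt0; apply: (@le_trans _ _ (opnorm (PDS (D + e%:C%:M) S))).
    by apply: ereal_sup_ubound; exists x.
  apply: ereal_sup_ubound; exists (D + e%:C%:M) => //.
  exact: posdef_diag_shift.
have [adjQ QQ] := orthoprojP S.
have sup_ge0 : (0 <= sup)%E.
  by apply: le_trans (le_sup 1 ltr01); rewrite lee_fin vnorm_ge0.
case: sup le_sup sup_ge0 => [r| |] le_sup sup_ge0; [|exact: leey|by []].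
rewrite lee_fin; apply: (vnorm_pds_le adjQ QQ hD) => e e_gt0 _.
by rewrite -lee_fin; apply: le_sup.
Qed.
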